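(* Let $m,T$ be positive integers with $T\ge 2$, let $n=2^T-1$, let $\mathbf{G}\in\mathbb{F}_2^{n\times m}$ have $n$ distinct nonzero rows $\mathbf{g}_1,\dots,\mathbf{g}_n$ spanning a subspace of dimension $T$ (so the rows are exactly the nonzero vectors of that subspace), and let $\mathbf{A}\in\mathbb{F}_2^{T\times m}$ have rows forming a basis of the row space of $\mathbf{G}$. For $1\le k\le T$ let $T_k^{\min}$ denote the smallest $T_k$ for which there is $\mathbf{P}\in\mathbb{F}_2^{T_k\times T}$ such that every $\mathbf{g}_i$ is a sum over $\mathbb{F}_2$ of at most $k$ rows of $\mathbf{P}\mathbf{A}$. Then: (i) for every $k<T$, $T_k^{\min}\ge T+1$; in particular, if $\lceil T/2\rceil\le k<T$ then $T_k^{\min}=T+1$; (ii) if $1\le k<\lceil T/2\rceil$ then $$T_k^{\min}\ \ge\ \frac{k}{e}\left(\frac{2^T-1}{k}\right)^{1/k}=2^{\Omega\left(\frac{T}{k}+\frac{k-1}{k}\log k\right)}.$$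
   Context: Logarithms are base 2 and $e$ is Euler's number. *)

From Stdlib Require Import Reals.
From HB Require Import structures.
From mathcomp Require Import all_boot all_order all_algebra.
Set Implicit Arguments. Unset Strict Implicit. Unset Printing Implicit Defensive.
Import GRing.Theory.

Definition feasible (T m n k Tk : nat) (G : 'M['F_2]_(n, m)) (A : 'M['F_2]_(T, m)) : Prop :=
  exists P : 'M['F_2]_(Tk, T),
    forall i : 'I_n, exists S : {set 'I_Tk},
      (#|S| <= k)%N /\ row i G = (\sum_(j in S) row j (P *m A))%R.

Definition is_Tmin (T m n k t : nat) (G : 'M['F_2]_(n, m)) (A : 'M['F_2]_(T, m)) : Prop :=
  feasible k t G A /\ forall Tk, feasible k Tk G A -> (t <= Tk)%N.

Definition ceil_half (T : nat) : nat := uphalf T.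

Definition lower_bound (T k : nat) : R :=
  Rmult (Rdiv (INR k) (exp 1))
        (Rpower (Rdiv (Rminus (pow 2 T) 1) (INR k)) (Rdiv 1 (INR k))).

(* If P witnesses feasibility, each g_i is the sum of the rows of P A indexed by
   some S_i with |S_i| <= k; as the g_i are distinct and nonzero, the S_i are
   distinct nonempty sets, so 2^T - 1 <= sum_{j <= k} C(T_k, j).  For T_k <= T
   this contradicts k < T (when T_k = T the full index set is excluded), and in
   general comparing with the binomial expansion of (T_k + k)^T_k and using
   (1 + k/T_k)^T_k <= e^k gives 2^T - 1 <= (e T_k / k)^k, which is (ii).
   For 2k >= T the T + 1 rows of A and their total sum suffice: a sum of more
   than k rows of A equals the total sum plus the at most T - k - 1 <= k - 1
   remaining rows. *)

From Stdlib Require Import Reals Lra.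
From HB Require Import structures.
From mathcomp Require Import all_boot all_order all_algebra zify.
Set Implicit Arguments. Unset Strict Implicit. Unset Printing Implicit Defensive.
Import GRing.Theory.

Definition small_supports (t k : nat) : {set {set 'I_t}} :=
  [set S | (S != set0) && (#|S| <= k)].

Lemma feasible_card_small_supports (m n k Tk T : nat)
    (G : 'M['F_2]_(n, m)) (A : 'M['F_2]_(T, m)) :
  injective (fun i : 'I_n => row i G) -> (forall i : 'I_n, row i G != 0%R) ->
  feasible k Tk G A -> n <= #|small_supports Tk k|.
Proof.
move=> row_inj row_neq0 [P feasP].
pose rowsum (S : {set 'I_Tk}) := (\sum_(j in S) row j (P *m A))%R.
have rowsG : [set row i G | i in [set: 'I_n]] \subset rowsum @: small_supports Tk k.
  apply/subsetP => _ /imsetP[i _ ->].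
  have [S [cardS rowE]] := feasP i.
  apply/imsetP; exists S => //; rewrite inE cardS andbT.
  by apply: contra (row_neq0 i) => /eqP S0; rewrite rowE S0 big_set0.
have := leq_trans (subset_leq_card rowsG) (leq_imset_card _ _).
by rewrite card_imset // cardsT card_ord.
Qed.

Lemma card_subsets_ord (t : nat) : #|{set 'I_t}| = 2 ^ t.
Proof. by rewrite -cardsT -powersetT card_powerset cardsT card_ord. Qed.

Lemma card_small_supports_le (t k : nat) : #|small_supports t k| <= 2 ^ t - 1.
Proof.
have : small_supports t k \subset ~: [set set0].
  by apply/subsetP => S; rewrite !inE => /andP[].
move/subset_leq_card; have := cardsC [set set0 : {set 'I_t}].
by rewrite cards1 card_subsets_ord => <-; rewrite add1n subn1.
Qed.

Lemma card_small_supports_le_proper (t k : nat) :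
  k < t -> #|small_supports t k| <= 2 ^ t - 2.
Proof.
move=> lt_kt.
have set0_neqT : set0 != [set: 'I_t].
  by apply/eqP => eq0T; have := cardsT 'I_t; rewrite -eq0T cards0 card_ord; lia.
have : small_supports t k \subset ~: [set set0; setT].
  apply/subsetP => S; rewrite !inE negb_or => /andP[-> le_Sk] /=.
  by apply: contraTneq le_Sk => ->; rewrite cardsT card_ord -ltnNge.
move/subset_leq_card; have := cardsC [set set0; setT : {set 'I_t}].
by rewrite cards2 set0_neqT card_subsets_ord => <-; rewrite addKn.
Qed.

Lemma card_small_sets_le (t k : nat) :
  #|[set S : {set 'I_t} | #|S| <= k]| <= \sum_(j < k.+1) 'C(t, j).
Proof.
elim: k => [|k IHk].
  rewrite big_ord1 -[t in 'C(t, _)](card_ord t) -card_draws.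
  by apply/subset_leq_card/subsetP => S; rewrite !inE leqn0.
have -> : [set S : {set 'I_t} | #|S| <= k.+1] =
          [set S : {set 'I_t} | #|S| <= k] :|: [set S : {set 'I_t} | #|S| == k.+1].
  by apply/setP => S; rewrite !inE leq_eqVlt ltnS orbC.
rewrite big_ord_recr /= -[t in 'C(t, _)](card_ord t) -card_draws.
by apply: leq_trans (leq_card_setU _ _) _; rewrite leq_add2r.
Qed.

Lemma card_small_supports_le_sum (t k : nat) :
  #|small_supports t k| <= \sum_(j < k.+1) 'C(t, j).
Proof.
apply: leq_trans (card_small_sets_le t k).
by apply/subset_leq_card/subsetP => S; rewrite !inE => /andP[].
Qed.

Lemma card_small_supports_lt (T t k : nat) :
  k < T -> t <= T -> #|small_supports t k| < 2 ^ T - 1.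
Proof.
move=> lt_kT le_tT.
have le2_2T : 2 <= 2 ^ T by rewrite -{1}(expn1 2) leq_exp2l //; lia.
have [lt_tT | eq_tT] := ltnP t T.
  have : 2 ^ t < 2 ^ T by rewrite ltn_exp2l.
  by have := card_small_supports_le t k; lia.
have -> : t = T by apply/eqP; rewrite eqn_leq le_tT.
by have := card_small_supports_le_proper lt_kT; lia.
Qed.

Lemma F2_eq1 (x : 'F_2) : x != 0%R -> x = 1%R.
Proof. by case: x => [[|[|x]] ?] //= _; apply: val_inj. Qed.

Lemma F2_addrr (m : nat) (v : 'rV['F_2]_m) : (v + v = 0)%R.
Proof. by rewrite -mulr2n -scaler_nat (pchar_Fp_0 (p := 2)) ?scale0r. Qed.

Lemma submx_F2_sum_rows (T m : nat) (A : 'M['F_2]_(T, m)) (v : 'rV['F_2]_m) :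
  (v <= A)%MS -> exists U : {set 'I_T}, v = (\sum_(l in U) row l A)%R.
Proof.
case/submxP=> D ->; exists [set l | D ord0 l != 0%R].
rewrite mulmx_sum_row (bigID (mem [set l | D ord0 l != 0%R])) /=.
rewrite [X in (_ + X)%R]big1 ?addr0 => [|l]; last first.
  by rewrite inE negbK => /eqP ->; rewrite scale0r.
by apply: eq_bigr => l; rewrite inE => /F2_eq1 ->; rewrite scale1r.
Qed.

Definition id_ones_mx (T : nat) : 'M['F_2]_(T.+1, T) :=
  \matrix_(j, l) (if (j < T)%N then (j == l :> nat)%:R else 1)%R.

Section IdOnes.

Variables (T m : nat) (A : 'M['F_2]_(T, m)).

Lemma row_id_ones_mul_widen (l : 'I_T) :
  row (widen_ord (leqnSn T) l) (id_ones_mx T *m A) = row l A.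
Proof.
rewrite row_mul mulmx_sum_row (bigD1 l) //= big1 ?addr0 => [|l' ne_l'l].
  by rewrite !mxE /= ltn_ord eqxx scale1r.
by rewrite !mxE /= ltn_ord eq_sym (negbTE (ne_l'l : (l' : nat) != l)) scale0r.
Qed.

Lemma row_id_ones_mul_max : row ord_max (id_ones_mx T *m A) = (\sum_l row l A)%R.
Proof.
rewrite row_mul mulmx_sum_row; apply: eq_bigr => l _.
by rewrite !mxE /= ltnn scale1r.
Qed.

End IdOnes.

Lemma feasible_id_ones (T m n k : nat) (G : 'M['F_2]_(n, m)) (A : 'M['F_2]_(T, m)) :
  T <= k.*2 -> (G <= A)%MS -> feasible k T.+1 G A.
Proof.
move=> le_T_2k sub_GA; exists (id_ones_mx T) => i.
pose w := widen_ord (leqnSn T).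
have w_inj : injective w by move=> a b /(congr1 val) /= /val_inj.
have sum_w (U : {set 'I_T}) :
    (\sum_(j in w @: U) row j (id_ones_mx T *m A) = \sum_(l in U) row l A)%R.
  rewrite big_imset /=; last by move=> a b _ _ /w_inj.
  by apply: eq_bigr => l _; apply: row_id_ones_mul_widen.
have [U rowE] := submx_F2_sum_rows (submx_trans (row_sub i G) sub_GA).
have [le_Uk | lt_kU] := leqP #|U| k.
  by exists (w @: U); rewrite card_imset // sum_w.
have max_notin : ord_max \notin w @: ~: U.
  by apply/imsetP => -[l _ /(congr1 val) /= eq_Tl]; move: (ltn_ord l); rewrite -eq_Tl ltnn.
exists (ord_max |: w @: ~: U); split.
  rewrite cardsU1 max_notin card_imset //.
  have := cardsC U; rewrite card_ord add1n; set c := #|~: U|; lia.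
rewrite big_setU1 //= sum_w row_id_ones_mul_max rowE (bigID (mem U) predT) /= -addrA.
rewrite [X in (_ + (X + _))%R](eq_bigl (fun l => l \in ~: U)) => [|l].
  by rewrite F2_addrr addr0.
by rewrite inE.
Qed.

(* Termwise comparison with the first k + 1 terms of the binomial expansion of (n + k)^n. *)
Lemma sum_binomial_le_pow (n k : nat) : k <= n ->
  k ^ k * n ^ (n - k) * (\sum_(j < k.+1) 'C(n, j)) <= (n + k) ^ n.
Proof.
move=> le_kn; rewrite expnDn big_distrr /=.
rewrite (big_ord_widen n.+1 (fun j => k ^ k * n ^ (n - k) * 'C(n, j))) ?ltnS //.
rewrite [X in _ <= X](bigID (fun j : 'I_n.+1 => j < k.+1)) /=.
apply: leq_trans (leq_addr _ _); apply: leq_sum => j; rewrite ltnS => le_jk.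
rewrite [X in X <= _]mulnC leq_mul2l; apply/orP; right.
have -> : k ^ k = k ^ j * k ^ (k - j) by rewrite -expnD subnKC.
have -> : n ^ (n - j) = n ^ (k - j) * n ^ (n - k) by rewrite -expnD; congr (_ ^ _); lia.
rewrite [X in _ <= X]mulnC -!mulnA leq_mul2l leq_mul2r; apply/orP; right; apply/orP; right.
by case: (k - j) => [|e] //; rewrite leq_exp2r.
Qed.

Section RealBounds.

Local Open Scope R_scope.

Lemma INR_expn (a b : nat) : INR (a ^ b)%N = INR a ^ b.
Proof. by elim: b => [|b IHb] //; rewrite expnS mulnE mult_INR IHb. Qed.

Lemma exp_pow (x : R) (n : nat) : exp x ^ n = exp (INR n * x).
Proof. by rewrite -Rpower_pow; [rewrite /Rpower ln_exp | exact: exp_pos]. Qed.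

Lemma pow_1_plus_le_exp (x : R) (n : nat) : -1 <= x -> (1 + x) ^ n <= exp (INR n * x).
Proof.
move=> ge_x_m1; rewrite -exp_pow; apply: pow_incr; split; first lra.
exact: exp_ineq1_le.
Qed.

Lemma Rpower_root_le (y z : R) (k : nat) :
  (0 < k)%N -> 0 < y -> 0 < z -> y <= z ^ k -> Rpower y (1 / INR k) <= z.
Proof.
move=> k_gt0 y_gt0 z_gt0 le_yz.
have INRk_gt0 : 0 < INR k by apply: lt_0_INR; apply/ltP.
have -> : z = Rpower (z ^ k) (1 / INR k).
  rewrite -Rpower_pow // Rpower_mult (_ : INR k * (1 / INR k) = 1) ?Rpower_1 //.
  by field; lra.
apply: Rle_Rpower_l; last by split.
by apply: Rlt_le; apply: Rdiv_lt_0_compat; lra.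
Qed.

Lemma INR_le_exp_ratio_pow (N n k : nat) : (0 < k)%N -> (k <= n)%N ->
  (N * (k ^ k * n ^ (n - k)) <= (n + k) ^ n)%N -> INR N <= (exp 1 * INR n / INR k) ^ k.
Proof.
move=> k_gt0 le_kn /leP/le_INR.
rewrite !mulnE !mult_INR !INR_expn plus_INR => le_Npow.
have k_gt0R : 0 < INR k by apply: lt_0_INR; apply/ltP.
have n_gt0R : 0 < INR n by apply: lt_0_INR; apply/ltP; apply: leq_trans le_kn.
have pow_nk_gt0 : 0 < INR n ^ (n - k) by apply: pow_lt.
have pow_k_gt0 : 0 < INR k ^ k by apply: pow_lt.
have factor_pow : (INR n + INR k) ^ n
    = INR n ^ (n - k) * (INR n ^ k * (1 + INR k / INR n) ^ n).
  rewrite -Rmult_assoc -pow_add plusE subnK // -Rpow_mult_distr.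
  by congr (_ ^ _); field; lra.
have le_exp : (1 + INR k / INR n) ^ n <= exp 1 ^ k.
  have -> : exp 1 ^ k = exp (INR n * (INR k / INR n)).
    by rewrite exp_pow; congr exp; field; lra.
  apply: pow_1_plus_le_exp.
  have : 0 < INR k / INR n by apply: Rdiv_lt_0_compat.
  lra.
have le_Nk : INR N * INR k ^ k <= (exp 1 * INR n) ^ k.
  apply: (Rmult_le_reg_l (INR n ^ (n - k))) => //.
  apply: (Rle_trans _ ((INR n + INR k) ^ n)).
    by rewrite (Rmult_comm (INR n ^ _)) Rmult_assoc.
  rewrite factor_pow Rpow_mult_distr (Rmult_comm (exp 1 ^ k)).
  apply: Rmult_le_compat_l; first lra.
  by apply: Rmult_le_compat_l => //; apply: pow_le; lra.
rewrite /Rdiv Rpow_mult_distr pow_inv.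
apply: (Rmult_le_reg_r (INR k ^ k)) => //.
by rewrite Rmult_assoc Rinv_l; lra.
Qed.

Lemma ratio_root_le (N n k : nat) : (0 < N)%N -> (0 < k)%N -> (k <= n)%N ->
  (N * (k ^ k * n ^ (n - k)) <= (n + k) ^ n)%N ->
  INR k / exp 1 * Rpower (INR N / INR k) (1 / INR k) <= INR n.
Proof.
move=> N_gt0 k_gt0 le_kn le_Npow.
have k_ge1R : 1 <= INR k by apply: (le_INR 1); apply/leP.
have N_gt0R : 0 < INR N by apply: lt_0_INR; apply/ltP.
have n_gt0R : 0 < INR n by apply: lt_0_INR; apply/ltP; apply: leq_trans le_kn.
have e_gt0 := exp_pos 1.
have le_root : Rpower (INR N / INR k) (1 / INR k) <= exp 1 * INR n / INR k.
  apply: Rpower_root_le => //.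
  - by apply: Rdiv_lt_0_compat; lra.
  - by apply: Rdiv_lt_0_compat; [apply: Rmult_lt_0_compat | lra].
  apply: Rle_trans (INR_le_exp_ratio_pow k_gt0 le_kn le_Npow).
  by apply: (Rmult_le_reg_r (INR k)); [lra | rewrite /Rdiv Rmult_assoc Rinv_l; nra].
apply: Rle_trans (Rmult_le_compat_l _ _ _ _ le_root) _.
  by apply: Rlt_le; apply: Rdiv_lt_0_compat; lra.
by apply: Req_le; field; lra.
Qed.

End RealBounds.

Theorem lemma1 (m T : nat) (G : 'M['F_2]_(2 ^ T - 1, m)) (A : 'M['F_2]_(T, m)) :
  (0 < m)%N -> (2 <= T)%N ->
  injective (fun i : 'I_(2 ^ T - 1) => row i G) ->
  (forall i : 'I_(2 ^ T - 1), row i G != 0%R) ->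
  \rank G = T ->
  row_free A -> (A == G)%MS ->
  (forall k : nat, (1 <= k)%N -> (k < T)%N ->
     (forall Tk : nat, feasible k Tk G A -> (T.+1 <= Tk)%N) /\
     ((ceil_half T <= k)%N -> is_Tmin k T.+1 G A)) /\
  (forall k : nat, (1 <= k)%N -> (k < ceil_half T)%N ->
     forall Tk : nat, feasible k Tk G A -> Rge (INR Tk) (lower_bound T k)).
Proof.
move=> _ le2_T row_inj row_neq0 _ _ /andP[_ sub_GA].
have card_le Tk k : feasible k Tk G A -> (2 ^ T - 1 <= #|small_supports Tk k|)%N.
  exact: feasible_card_small_supports.
have lower k Tk : (k < T)%N -> feasible k Tk G A -> (T.+1 <= Tk)%N.
  move=> lt_kT /card_le; rewrite ltnNge; apply: contraTN => le_TkT.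
  by rewrite -ltnNge card_small_supports_lt.
split=> [k _ lt_kT | k k_gt0 lt_k_half Tk feas].
  split=> [Tk|le_half_k]; first exact: lower.
  split=> [|Tk]; last exact: lower.
  by apply: feasible_id_ones sub_GA; rewrite -leq_uphalf_double.
have lt_kT : (k < T)%N.
  by move: lt_k_half; rewrite /ceil_half ltnNge leq_uphalf_double -ltnNge; lia.
have le_kTk : (k <= Tk)%N by have := lower k Tk lt_kT feas; lia.
have pos_2T : (0 < 2 ^ T - 1)%N.
  have : (2 ^ 1 < 2 ^ T)%N by rewrite ltn_exp2l.
  by rewrite expn1; lia.
apply: Rle_ge; rewrite /lower_bound (_ : Rminus (pow 2 T) 1 = INR (2 ^ T - 1)); last first.
  by rewrite minus_INR ?INR_expn //; apply/leP; lia.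
apply: ratio_root_le => //; rewrite mulnC.
apply: leq_trans (sum_binomial_le_pow le_kTk); rewrite leq_mul2l.
by rewrite (leq_trans (card_le _ _ feas)) ?card_small_supports_le_sum ?orbT.
Qed.
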